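(* Let $r,s\ge0$, let $\Delta=(v_1,\dots,v_n)$ be a collection of vectors in $\mathbb{Z}^2\setminus\{0\}$, let $F\subset\{1,\dots,n\}$ with $r+2s+|F|=|\Delta|-1$, and let $\mathcal{P}$ be a collection of conditions in general position for $\mathrm{ev}_F$. Then a curve $C\in\mathcal{M}_{(r,s)}(\Delta)$ with $\mathrm{ev}_F(C)=\mathcal{P}$ is a refined descendant curve if and only if it is an unoriented refined broccoli curve; in particular the two sets of such curves through $\mathcal{P}$ are in bijection.
   Context: Curves. An $(r,s)$-marked curve of degree $\Delta$ is $C=(\Gamma,h,x_1,\dots,x_{r+s})$ with $\Gamma$ a metric graph whose components are trees, $h:\Gamma\to\mathbb{R}^2$ continuous, affine with integral direction vectors on edges, balanced at vertices; $x_1,\dots,x_r$ (real) and $x_{r+1},\dots,x_{r+s}$ (complex) are contracted unbounded edges (markings), the other unbounded edges $y_1,\dots,y_n$ (labeled ends) have outward direction vectors $\Delta=(v(y_1),\dots,v(y_n))$. $\mathcal{M}_{(r,s)}(\Delta)$ is the polyhedral complex of isomorphism classes of connected such curves (cells = combinatorial types). $\mathrm{ev}_F(C)=(h(x_1),\dots,h(x_{r+s}),(h(y_i))_{i\in F})\in(\mathbb{R}^2)^{r+s}\times\prod_{i\in F}\mathbb{R}^2/\langle v(y_i)\rangle$; $\mathcal P$ is in general position for $\mathrm{ev}_F$ if it avoids the images of all cells whose image has dimension $<2(r+s)+|F|$. Unoriented refined broccoli curve: a curve in $\mathcal{M}_{(r,s)}(\Delta)$ each of whose vertices is (I') 3-valent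 in $\Gamma$ and adjacent to a real marking, (II') 3-valent without marking, or (III') 4-valent in $\Gamma$ and adjacent to a complex marking. Refined descendant curve: a curve in $\mathcal{M}_{(r,s)}(\Delta)$ such that each real marking is adjacent to a 3-valent vertex of $\Gamma$ and each complex marking is adjacent to a 4-valent vertex of $\Gamma$ (unmarked vertices of any valence are allowed). *)

From Stdlib Require Import Reals ZArith List Arith.
Import ListNotations.
Open Scope R_scope.

Fixpoint sumR (k : nat) (f : nat -> R) : R :=
  match k with O => 0 | S k' => sumR k' f + f k' end.

Fixpoint sumZ2 (k : nat) (f : nat -> Z * Z) : Z * Z :=
  match k with
  | O => (0%Z, 0%Z)
  | S k' => let '(a, b) := sumZ2 k' f in let '(c, d) := f k' in (a + c, b + d)%Z
  end.

Fixpoint countn (k : nat) (p : nat -> bool) : nat :=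
  match k with O => O | S k' => (countn k' p + (if p k' then 1 else 0))%nat end.

Definition negZ2 (v : Z * Z) : Z * Z := ((- fst v)%Z, (- snd v)%Z).
Definition addZ2 (v w : Z * Z) : Z * Z := ((fst v + fst w)%Z, (snd v + snd w)%Z).

(* Vertices are 0..nv-1, bounded edges 0..ne-1 (edge e goes from vertex
   esrc e to vertex etgt e, has length elen e and integral direction vector
   edir e, i.e. h(etgt e) - h(esrc e) = elen e * edir e).  pos v = h(v).
   The marking x_{i+1} (i < r+s) is a contracted end at vertex mvert i
   (x_1..x_r real, x_{r+1}..x_{r+s} complex); the labeled end y_{j+1}
   (j < n = |Delta|) is an end at vertex yvert j with outward direction
   the j-th entry of Delta. *)
Record curve := mkCurve {
  nv : nat;
  ne : nat;
  esrc : nat -> nat;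
  etgt : nat -> nat;
  edir : nat -> Z * Z;
  elen : nat -> R;
  pos : nat -> R * R;
  mvert : nat -> nat;
  yvert : nat -> nat
}.

Definition dirD (D : list (Z * Z)) (j : nat) : Z * Z := nth j D (0%Z, 0%Z).

Definition valence (r s n : nat) (C : curve) (v : nat) : nat :=
  (countn (ne C) (fun e => Nat.eqb (esrc C e) v)
   + countn (ne C) (fun e => Nat.eqb (etgt C e) v)
   + countn (r + s) (fun i => Nat.eqb (mvert C i) v)
   + countn n (fun j => Nat.eqb (yvert C j) v))%nat.

Inductive reach (C : curve) : nat -> nat -> Prop :=
  | reach_refl v : reach C v v
  | reach_fwd u e : (e < ne C)%nat -> reach C u (esrc C e) -> reach C u (etgt C e)
  | reach_bwd u e : (e < ne C)%nat -> reach C u (etgt C e) -> reach C u (esrc C e).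

Definition is_tree (C : curve) : Prop :=
  nv C = S (ne C) /\ forall v, (v < nv C)%nat -> reach C 0 v.

(* outward sum of direction vectors at v (markings are contracted: weight 0) *)
Definition balance_sum (D : list (Z * Z)) (C : curve) (v : nat) : Z * Z :=
  addZ2 (sumZ2 (ne C) (fun e => if Nat.eqb (esrc C e) v then edir C e else (0%Z, 0%Z)))
  (addZ2 (negZ2 (sumZ2 (ne C) (fun e => if Nat.eqb (etgt C e) v then edir C e else (0%Z, 0%Z))))
         (sumZ2 (length D) (fun j => if Nat.eqb (yvert C j) v then dirD D j else (0%Z, 0%Z)))).

Definition is_curve (r s : nat) (D : list (Z * Z)) (C : curve) : Prop :=
  (forall e, (e < ne C)%nat -> (esrc C e < nv C)%nat /\ (etgt C e < nv C)%nat) /\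
  (forall i, (i < r + s)%nat -> (mvert C i < nv C)%nat) /\
  (forall j, (j < length D)%nat -> (yvert C j < nv C)%nat) /\
  is_tree C /\
  (forall v, (v < nv C)%nat -> (3 <= valence r s (length D) C v)%nat) /\
  (forall e, (e < ne C)%nat -> 0 < elen C e) /\
  (forall e, (e < ne C)%nat ->
     fst (pos C (etgt C e)) = fst (pos C (esrc C e)) + elen C e * IZR (fst (edir C e)) /\
     snd (pos C (etgt C e)) = snd (pos C (esrc C e)) + elen C e * IZR (snd (edir C e))) /\
  (forall v, (v < nv C)%nat -> balance_sum D C v = (0%Z, 0%Z)).

Definition same_type (r s n : nat) (C C' : curve) : Prop :=
  nv C = nv C' /\ ne C = ne C' /\
  (forall e, (e < ne C)%nat ->
     esrc C e = esrc C' e /\ etgt C e = etgt C' e /\ edir C e = edir C' e) /\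
  (forall i, (i < r + s)%nat -> mvert C i = mvert C' i) /\
  (forall j, (j < n)%nat -> yvert C j = yvert C' j).

(* R^2/<v> is identified with R via the isomorphism [p] |-> det(v,p). *)
Definition quot_coord (v : Z * Z) (p : R * R) : R :=
  IZR (fst v) * snd p - IZR (snd v) * fst p.

Definition cardF (n : nat) (F : nat -> bool) : nat := countn n F.

(* ev_F(C) in (R^2)^(r+s) x prod_{j in F} R^2/<v_j>, as a list of reals *)
Definition ev_F (r s : nat) (D : list (Z * Z)) (F : nat -> bool) (C : curve) : list R :=
  flat_map (fun i => [fst (pos C (mvert C i)); snd (pos C (mvert C i))]) (seq 0 (r + s))
  ++ map (fun j => quot_coord (dirD D j) (pos C (yvert C j))) (filter F (seq 0 (length D))).

Definition aff_indep (pts : nat -> list R) (k : nat) : Prop :=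
  forall c : nat -> R,
    (forall t, sumR k (fun i => c (S i) * (nth t (pts (S i)) 0 - nth t (pts 0%nat) 0)) = 0) ->
    forall i, (1 <= i <= k)%nat -> c i = 0.

Definition affdim_ge (S : list R -> Prop) (k : nat) : Prop :=
  exists pts : nat -> list R, (forall i, (i <= k)%nat -> S (pts i)) /\ aff_indep pts k.

Definition cell_image (r s : nat) (D : list (Z * Z)) (F : nat -> bool) (C : curve)
  : list R -> Prop :=
  fun p => exists C', is_curve r s D C' /\ same_type r s (length D) C C' /\ ev_F r s D F C' = p.

(* P avoids the images of all cells whose image has dimension < 2(r+s)+|F| *)
Definition general_position (r s : nat) (D : list (Z * Z)) (F : nat -> bool) (P : list R)
  : Prop :=
  forall C, is_curve r s D C -> ev_F r s D F C = P ->
    affdim_ge (cell_image r s D F C) (2 * (r + s) + cardF (length D) F).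

Definition refined_descendant (r s : nat) (D : list (Z * Z)) (C : curve) : Prop :=
  (forall i, (i < r)%nat -> valence r s (length D) C (mvert C i) = 3%nat) /\
  (forall i, (r <= i < r + s)%nat -> valence r s (length D) C (mvert C i) = 4%nat).

Definition unoriented_refined_broccoli (r s : nat) (D : list (Z * Z)) (C : curve) : Prop :=
  forall v, (v < nv C)%nat ->
    (valence r s (length D) C v = 3%nat /\ exists i, (i < r)%nat /\ mvert C i = v) \/
    (valence r s (length D) C v = 3%nat /\ forall i, (i < r + s)%nat -> mvert C i <> v) \/
    (valence r s (length D) C v = 4%nat /\ exists i, (r <= i < r + s)%nat /\ mvert C i = v).

(* Both conditions require real markings on trivalent and complex markings on 4-valent
   vertices; they differ only in that broccoli curves also have all unmarked vertices trivalent.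
   General position gives two facts about the cell of C.  First, the markings sit at distinct
   vertices: otherwise two coordinates of ev_F agree on the whole cell, whose image then has
   too small an affine dimension.  Second, the cell is parametrised linearly by the position of
   one vertex and the |E| edge lengths, so |E| + 2 >= 2(r+s) + |F|.  Now the valences sum to
   2|E| + r + s + |Delta|, while for a descendant curve they sum to at least 3|V| + s, plus one
   more if some unmarked vertex has valence at least 4.  With |V| = |E| + 1 and
   |Delta| = r + 2s + |F| + 1 this extra one contradicts the edge bound. *)

From Stdlib Require Import Reals List Arith Bool Lia Lra Classical IndefiniteDescription.
From Pilot Require Import Defs. (* after Reals, so that [pos] is the curve field *)
Import ListNotations.
Open Scope R_scope.

Lemma sumR_ext k f g : (forall i, (i < k)%nat -> f i = g i) -> sumR k f = sumR k g.
Proof.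
  induction k as [|k IH]; intros H; simpl; [reflexivity|].
  rewrite IH by (intros; apply H; lia); rewrite H by lia; reflexivity.
Qed.

Lemma sumR_0 k f : (forall i, (i < k)%nat -> f i = 0) -> sumR k f = 0.
Proof.
  induction k as [|k IH]; intros H; simpl; [reflexivity|].
  rewrite IH by (intros; apply H; lia); rewrite H by lia; lra.
Qed.

Lemma sumR_add k f g : sumR k (fun i => f i + g i) = sumR k f + sumR k g.
Proof. induction k; simpl; lra. Qed.

Lemma sumR_sub k f g : sumR k (fun i => f i - g i) = sumR k f - sumR k g.
Proof. induction k; simpl; lra. Qed.

Lemma sumR_mull k a f : sumR k (fun i => a * f i) = a * sumR k f.
Proof. induction k; simpl; lra. Qed.

Lemma sumR_mulr k a f : sumR k (fun i => f i * a) = sumR k f * a.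
Proof. induction k; simpl; lra. Qed.

Lemma sumR_delta k i0 g :
  sumR k (fun i => (if Nat.eqb i i0 then 1 else 0) * g i) = if Nat.ltb i0 k then g i0 else 0.
Proof.
  induction k as [|k IH]; simpl; [reflexivity|].
  rewrite IH.
  destruct (Nat.ltb_spec i0 k), (Nat.ltb_spec i0 (S k)), (Nat.eqb_spec k i0);
    subst; try lia; lra.
Qed.

Lemma sumR_swap k m f :
  sumR k (fun i => sumR m (fun l => f i l)) = sumR m (fun l => sumR k (fun i => f i l)).
Proof.
  induction k as [|k IH]; simpl.
  - symmetry; apply sumR_0; reflexivity.
  - rewrite IH, <- sumR_add; reflexivity.
Qed.

Lemma countn_ext k p q : (forall i, (i < k)%nat -> p i = q i) -> countn k p = countn k q.
Proof.
  induction k as [|k IH]; intros H; simpl; [reflexivity|].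
  rewrite IH by (intros; apply H; lia); rewrite H by lia; reflexivity.
Qed.

Lemma countn_true k : countn k (fun _ => true) = k.
Proof. induction k; simpl; lia. Qed.

Lemma countn_gt0 k p : (0 < countn k p)%nat -> exists i, (i < k)%nat /\ p i = true.
Proof.
  induction k as [|k IH]; simpl; intros H; [lia|].
  destruct (p k) eqn:Hk; [exists k; auto|].
  destruct IH as [i [Hi Hp]]; [lia | exists i; auto].
Qed.

Lemma countn_remove k p i0 : (i0 < k)%nat -> p i0 = true ->
  (countn k (fun i => p i && negb (Nat.eqb i i0)) + 1 = countn k p)%nat.
Proof.
  induction k as [|k IH]; simpl; intros Hi0 Hp; [lia|].
  destruct (Nat.eqb_spec k i0) as [->|Hne].
  - rewrite Hp, andb_false_r, (countn_ext _ _ p); [lia|].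
    intros i Hi; destruct (Nat.eqb_spec i i0); [lia | apply andb_true_r].
  - rewrite andb_true_r, <- IH by (auto; lia); lia.
Qed.

Lemma sumR_sub_delta k i0 (c w : nat -> R) K : (i0 < k)%nat ->
  sumR k (fun i => (c i - (if Nat.eqb i i0 then 1 else 0) * K) * w i)
  = sumR k (fun i => c i * w i) - K * w i0.
Proof.
  intros Hi0.
  rewrite (sumR_ext k _ (fun i => c i * w i - (if Nat.eqb i i0 then 1 else 0) * (K * w i)))
    by (intros; lra).
  rewrite sumR_sub, sumR_delta.
  destruct (Nat.ltb_spec i0 k); [reflexivity | lia].
Qed.

Lemma exists_linear_dependence m : forall k (p : nat -> bool) (w : nat -> nat -> R),
  (m < countn k p)%nat ->
  exists c : nat -> R, (forall i, p i = false -> c i = 0) /\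
    (exists i, (i < k)%nat /\ c i <> 0) /\
    forall l, (l < m)%nat -> sumR k (fun i => c i * w i l) = 0.
Proof.
  induction m as [|m IH]; intros k p w Hm.
  - destruct (countn_gt0 k p Hm) as [i0 [Hi0 Hp0]].
    exists (fun i => if Nat.eqb i i0 then 1 else 0); repeat split.
    + intros i Hi; destruct (Nat.eqb_spec i i0); [congruence | reflexivity].
    + exists i0; rewrite Nat.eqb_refl; split; [assumption | lra].
    + intros; lia.
  - destruct (classic (exists i0, (i0 < k)%nat /\ p i0 = true /\ w i0 m <> 0))
      as [[i0 [Hi0 [Hp0 Hw0]]] | Hnopivot].
    + (* eliminate column [m] with the pivot row [i0] and recurse on the other rows *)
      pose proof (countn_remove k p i0 Hi0 Hp0) as Hcount.
      destruct (IH k (fun i => p i && negb (Nat.eqb i i0))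
                  (fun i l => w i l - w i m / w i0 m * w i0 l))
        as [c [Hsupp [[i1 [Hi1 Hc1]] Hc]]]; [lia|].
      set (K := sumR k (fun i => c i * w i m) / w i0 m).
      assert (Hi1i0 : Nat.eqb i1 i0 = false).
      { destruct (Nat.eqb_spec i1 i0) as [->|]; [|reflexivity].
        exfalso; apply Hc1, Hsupp; rewrite Nat.eqb_refl, andb_false_r; reflexivity. }
      exists (fun i => c i - (if Nat.eqb i i0 then 1 else 0) * K); repeat split.
      * intros i Hpi; rewrite Hsupp by (rewrite Hpi; reflexivity).
        destruct (Nat.eqb_spec i i0); [congruence | lra].
      * exists i1; rewrite Hi1i0; split; [assumption | lra].
      * intros l Hl; rewrite sumR_sub_delta by assumption.
        destruct (Nat.eq_dec l m) as [->|Hlm]; [unfold K; field; assumption|].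
        specialize (Hc l ltac:(lia)).
        rewrite (sumR_ext k _ (fun i => c i * w i l - c i * w i m * (w i0 l / w i0 m))),
          sumR_sub, sumR_mulr in Hc by (intros; field; assumption).
        unfold K; rewrite <- Hc; field; assumption.
    + destruct (IH k p w) as [c [Hsupp [Hnz Hc]]]; [lia|].
      exists c; repeat split; [assumption | assumption |].
      intros l Hl; destruct (Nat.eq_dec l m) as [->|]; [|apply Hc; lia].
      apply sumR_0; intros i Hi; destruct (p i) eqn:Hpi.
      * assert (w i m = 0) as -> by (apply NNPP; intros Hw; apply Hnopivot; eauto); lra.
      * rewrite Hsupp by assumption; lra.
Qed.

Definition linear_in {X : Type} (Q : X -> Prop) (th : X -> nat -> R) (m : nat) (g : X -> R)
  : Prop :=
  exists M : nat -> R, forall x, Q x -> g x = sumR m (fun l => th x l * M l).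

Section LinearIn.
Variables (X : Type) (Q : X -> Prop) (th : X -> nat -> R) (m : nat).

Lemma linear_in_ext g h : (forall x, Q x -> g x = h x) -> linear_in Q th m h -> linear_in Q th m g.
Proof. intros E [M HM]; exists M; intros x Hx; rewrite E, HM by assumption; reflexivity. Qed.

Lemma linear_in_0 : linear_in Q th m (fun _ => 0).
Proof. exists (fun _ => 0); intros; symmetry; apply sumR_0; intros; lra. Qed.

Lemma linear_in_param l0 : (l0 < m)%nat -> linear_in Q th m (fun x => th x l0).
Proof.
  intros Hl0; exists (fun l => if Nat.eqb l l0 then 1 else 0); intros x _.
  rewrite (sumR_ext m _ (fun l => (if Nat.eqb l l0 then 1 else 0) * th x l)) by (intros; lra).
  rewrite sumR_delta; destruct (Nat.ltb_spec l0 m); [reflexivity | lia].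
Qed.

Lemma linear_in_add g h :
  linear_in Q th m g -> linear_in Q th m h -> linear_in Q th m (fun x => g x + h x).
Proof.
  intros [M1 H1] [M2 H2]; exists (fun l => M1 l + M2 l); intros x Hx.
  rewrite H1, H2, <- sumR_add by assumption; apply sumR_ext; intros; lra.
Qed.

Lemma linear_in_scale a g : linear_in Q th m g -> linear_in Q th m (fun x => a * g x).
Proof.
  intros [M HM]; exists (fun l => a * M l); intros x Hx.
  rewrite HM, <- sumR_mull by assumption; apply sumR_ext; intros; lra.
Qed.

Lemma linear_in_nth (G : list (X -> R)) :
  (forall g, In g G -> linear_in Q th m g) ->
  forall t, linear_in Q th m (fun x => nth t (map (fun g => g x) G) 0).
Proof.
  induction G as [|g G IH]; intros HG [|t]; simpl.
  - apply linear_in_0.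
  - apply linear_in_0.
  - apply HG; left; reflexivity.
  - apply IH; intros; apply HG; right; assumption.
Qed.

(* A set covered by a family whose coordinates depend linearly on [m < k] parameters has
   affine dimension below [k]: the differences of [k + 1] points live in an [m]-space. *)
Lemma not_affdim_ge_linear_family (A : list R -> Prop) (E : X -> list R) k :
  (forall pt, A pt -> exists x, Q x /\ E x = pt) ->
  (forall t, linear_in Q th m (fun x => nth t (E x) 0)) ->
  (m < k)%nat -> ~ affdim_ge A k.
Proof.
  intros HS Hlin Hmk [pts [Hpts Hindep]].
  destruct (HS _ (Hpts 0%nat (Nat.le_0_l k))) as [x0 _].
  destruct (functional_choice (fun i x => (i <= k)%nat -> Q x /\ E x = pts i)) as [xs Hxs].
  { intros i; destruct (le_lt_dec i k) as [Hi|Hi].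
    - destruct (HS _ (Hpts i Hi)) as [x Hx]; exists x; auto.
    - exists x0; intros; lia. }
  destruct (exists_linear_dependence m k (fun _ => true)
              (fun i l => th (xs (S i)) l - th (xs 0%nat) l)) as [c [_ [[i1 [Hi1 Hc1]] Hc]]];
    [rewrite countn_true; assumption|].
  apply Hc1; refine (Hindep (fun i => match i with O => 0 | S j => c j end) _ (S i1) _); [|lia].
  intros t; destruct (Hlin t) as [M HM]; simpl.
  destruct (Hxs 0%nat (Nat.le_0_l k)) as [HQ0 HE0].
  rewrite (sumR_ext k _ (fun i => sumR m (fun l => c i * (th (xs (S i)) l - th (xs 0%nat) l) * M l))).
  - rewrite sumR_swap; apply sumR_0; intros l Hl; rewrite sumR_mulr, Hc by assumption; lra.
  - intros i Hi; destruct (Hxs (S i) ltac:(lia)) as [HQ HE].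
    rewrite <- HE, <- HE0, !HM, <- sumR_sub, <- sumR_mull by assumption.
    apply sumR_ext; intros; lra.
Qed.

End LinearIn.

Lemma not_affdim_ge_equal_coords (A : list R -> Prop) L a b : (a < b)%nat -> (b < L)%nat ->
  (forall pt, A pt -> length pt = L /\ nth a pt 0 = nth b pt 0) -> ~ affdim_ge A L.
Proof.
  intros Hab HbL HS.
  (* parametrise by all coordinates except the [b]-th *)
  set (th := fun pt l => nth (if Nat.ltb l b then l else S l) pt 0).
  apply (not_affdim_ge_linear_family _ A th (L - 1) A (fun pt => pt)); [eauto | | lia].
  intros t.
  destruct (Nat.ltb_spec t b) as [Htb|Hbt]; [|destruct (Nat.eq_dec t b) as [->|Hbt']].
  - apply (linear_in_ext _ _ _ _ _ (fun pt => th pt t)); [|apply linear_in_param; lia].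
    intros pt _; unfold th; destruct (Nat.ltb_spec t b); [reflexivity | lia].
  - apply (linear_in_ext _ _ _ _ _ (fun pt => th pt a)); [|apply linear_in_param; lia].
    intros pt Hpt; unfold th; destruct (Nat.ltb_spec a b); [|lia].
    symmetry; apply HS, Hpt.
  - destruct (Nat.ltb_spec t L) as [HtL|HLt].
    + apply (linear_in_ext _ _ _ _ _ (fun pt => th pt (t - 1)%nat)); [|apply linear_in_param; lia].
      intros pt _; unfold th; destruct (Nat.ltb_spec (t - 1) b); [lia|].
      f_equal; lia.
    + apply (linear_in_ext _ _ _ _ _ (fun _ => 0)); [|apply linear_in_0].
      intros pt Hpt; apply nth_overflow; destruct (HS pt Hpt); lia.
Qed.

Definition in_cell (r s : nat) (D : list (Z * Z)) (C C' : curve) : Prop :=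
  is_curve r s D C' /\ same_type r s (length D) C C'.

Definition cell_coord (C : curve) (l : nat) : R :=
  match l with O => fst (pos C 0) | 1%nat => snd (pos C 0) | S (S e) => elen C e end.

Section Cell.
Variables (r s : nat) (D : list (Z * Z)) (C : curve).

Notation cell_linear := (linear_in (in_cell r s D C) cell_coord (ne C + 2)).

Lemma in_cell_edge C' e : in_cell r s D C C' -> (e < ne C)%nat ->
  fst (pos C' (etgt C e)) = fst (pos C' (esrc C e)) + elen C' e * IZR (fst (edir C e)) /\
  snd (pos C' (etgt C e)) = snd (pos C' (esrc C e)) + elen C' e * IZR (snd (edir C e)).
Proof.
  intros [HC' [_ [Hne [Hedges _]]]] He.
  destruct (Hedges e He) as [-> [-> ->]].
  apply HC'; rewrite <- Hne; assumption.
Qed.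

Lemma cell_linear_step g g' e a : (e < ne C)%nat -> cell_linear g ->
  (forall C', in_cell r s D C C' -> g' C' = g C' + a * elen C' e) -> cell_linear g'.
Proof.
  intros He Hg Hg'.
  apply (linear_in_ext _ _ _ _ _ (fun C' => g C' + a * cell_coord C' (S (S e)))); [exact Hg'|].
  apply linear_in_add, linear_in_scale, linear_in_param; [assumption | lia].
Qed.

Lemma cell_linear_pos v : reach C 0 v ->
  cell_linear (fun C' => fst (pos C' v)) /\ cell_linear (fun C' => snd (pos C' v)).
Proof.
  remember 0%nat as u eqn:Hu; induction 1 as [| u e He _ IH | u e He _ IH]; subst.
  - split; [refine (linear_in_param _ _ _ _ 0%nat _) | refine (linear_in_param _ _ _ _ 1%nat _)];
      lia.
  - destruct IH as [IH1 IH2]; [reflexivity|].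
    split; [apply (cell_linear_step _ _ e (IZR (fst (edir C e))) He IH1)
           | apply (cell_linear_step _ _ e (IZR (snd (edir C e))) He IH2)];
      intros C' HC'; pose proof (in_cell_edge C' e HC' He); simpl; lra.
  - destruct IH as [IH1 IH2]; [reflexivity|].
    split; [apply (cell_linear_step _ _ e (- IZR (fst (edir C e))) He IH1)
           | apply (cell_linear_step _ _ e (- IZR (snd (edir C e))) He IH2)];
      intros C' HC'; pose proof (in_cell_edge C' e HC' He); simpl; lra.
Qed.

Variable (F : nat -> bool).

Definition ev_functionals : list (curve -> R) :=
  flat_map (fun i => [fun C' => fst (pos C' (mvert C i)); fun C' => snd (pos C' (mvert C i))])
    (seq 0 (r + s))
  ++ map (fun j C' => quot_coord (dirD D j) (pos C' (yvert C j))) (filter F (seq 0 (length D))).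

Lemma ev_F_in_cell C' : in_cell r s D C C' ->
  ev_F r s D F C' = map (fun g => g C') ev_functionals.
Proof.
  intros [_ [_ [_ [_ [Hm Hy]]]]]; unfold ev_F, ev_functionals; rewrite map_app; f_equal.
  - rewrite !flat_map_concat_map, concat_map, map_map.
    f_equal; apply map_ext_in; intros i Hi; apply in_seq in Hi.
    rewrite Hm by lia; reflexivity.
  - rewrite map_map; apply map_ext_in; intros j Hj.
    apply filter_In in Hj as [Hj _]; apply in_seq in Hj.
    rewrite Hy by lia; reflexivity.
Qed.

Lemma cell_linear_ev_F : is_curve r s D C ->
  forall t, cell_linear (fun C' => nth t (ev_F r s D F C') 0).
Proof.
  intros [_ [Hmv [Hyv [[_ Hreach] _]]]] t.
  apply (linear_in_ext _ _ _ _ _ (fun C' => nth t (map (fun g => g C') ev_functionals) 0)).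
  { intros C' HC'; rewrite ev_F_in_cell by assumption; reflexivity. }
  apply linear_in_nth; intros g Hg; apply in_app_or in Hg as [Hg|Hg].
  - apply in_flat_map in Hg as [i [Hi Hg]]; apply in_seq in Hi.
    destruct (cell_linear_pos (mvert C i) (Hreach _ (Hmv i ltac:(lia)))).
    destruct Hg as [<-|[<-|[]]]; assumption.
  - apply in_map_iff in Hg as [j [<- Hj]]; apply filter_In in Hj as [Hj _]; apply in_seq in Hj.
    destruct (cell_linear_pos (yvert C j) (Hreach _ (Hyv j ltac:(lia)))).
    unfold quot_coord; apply (linear_in_ext _ _ _ _ _
      (fun C' => IZR (fst (dirD D j)) * snd (pos C' (yvert C j))
                 + - IZR (snd (dirD D j)) * fst (pos C' (yvert C j)))); [intros; lra|].
    apply linear_in_add; apply linear_in_scale; assumption.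
Qed.

End Cell.

Lemma general_position_edge_bound r s D F P C :
  general_position r s D F P -> is_curve r s D C -> ev_F r s D F C = P ->
  (2 * (r + s) + cardF (length D) F <= ne C + 2)%nat.
Proof.
  intros Hgp HC HP.
  destruct (le_lt_dec (2 * (r + s) + cardF (length D) F) (ne C + 2)) as [|Hlt]; [assumption|].
  exfalso; refine (not_affdim_ge_linear_family _ _ cell_coord _ (cell_image r s D F C)
                     (ev_F r s D F) _ _ (cell_linear_ev_F r s D C F HC) Hlt (Hgp C HC HP)).
  intros pt [C' [HC' [Htype <-]]]; exists C'; split; [split|]; assumption || reflexivity.
Qed.

Lemma length_ev_F r s D F C :
  length (ev_F r s D F C) = (2 * (r + s) + cardF (length D) F)%nat.
Proof.
  unfold ev_F, cardF; rewrite length_app, length_map, (flat_map_constant_length (c := 2%nat))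
    by reflexivity.
  rewrite length_seq; f_equal; [lia|].
  induction (length D) as [|n IH]; [reflexivity|].
  rewrite seq_S, filter_app, length_app, IH; simpl; destruct (F n); reflexivity.
Qed.

Lemma nth_flat_map_pair {B} (f g : nat -> B) d a k i : (i < k)%nat ->
  nth (2 * i) (flat_map (fun j => [f j; g j]) (seq a k)) d = f (a + i)%nat.
Proof.
  revert a i; induction k as [|k IH]; intros a [|i] Hi; try lia.
  - simpl; f_equal; lia.
  - replace (2 * S i)%nat with (S (S (2 * i))) by lia; cbn -[Nat.mul].
    rewrite IH by lia; f_equal; lia.
Qed.

Lemma nth_ev_F_marking r s D F C i : (i < r + s)%nat ->
  nth (2 * i) (ev_F r s D F C) 0 = fst (pos C (mvert C i)).
Proof.
  intros Hi; unfold ev_F; rewrite app_nth1.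
  - apply nth_flat_map_pair; assumption.
  - rewrite (flat_map_constant_length (c := 2%nat)), length_seq by reflexivity; lia.
Qed.

(* Two markings at one vertex make two coordinates of [ev_F] agree on the whole cell. *)
Lemma general_position_marking_vertices_neq r s D F P C a b :
  general_position r s D F P -> is_curve r s D C -> ev_F r s D F C = P ->
  (a < b < r + s)%nat -> mvert C a <> mvert C b.
Proof.
  intros Hgp HC HP Hab Hmab.
  refine (not_affdim_ge_equal_coords (cell_image r s D F C) _ (2 * a) (2 * b) _ _ _
            (Hgp C HC HP)); [lia | lia |].
  intros pt [C' [_ [[_ [_ [_ [Hm _]]]] <-]]]; split; [apply length_ev_F|].
  rewrite !nth_ev_F_marking, <- !Hm by lia; congruence.
Qed.

Lemma general_position_marking_vertices_inj r s D F P C i j :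
  general_position r s D F P -> is_curve r s D C -> ev_F r s D F C = P ->
  (i < r + s)%nat -> (j < r + s)%nat -> mvert C i = mvert C j -> i = j.
Proof.
  intros Hgp HC HP Hi Hj Hij.
  destruct (lt_eq_lt_dec i j) as [[Hlt|Heq]|Hlt]; [exfalso | assumption | exfalso].
  - exact (general_position_marking_vertices_neq r s D F P C i j Hgp HC HP ltac:(lia) Hij).
  - exact (general_position_marking_vertices_neq r s D F P C j i Hgp HC HP ltac:(lia)
             (eq_sym Hij)).
Qed.

Section Counting.
Local Open Scope nat_scope.

Fixpoint sumN (k : nat) (f : nat -> nat) : nat :=
  match k with O => O | S k' => sumN k' f + f k' end.

Lemma sumN_add k f g : sumN k (fun i => f i + g i) = sumN k f + sumN k g.
Proof. induction k; simpl; lia. Qed.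

Lemma sumN_const k c : sumN k (fun _ => c) = k * c.
Proof. induction k; simpl; lia. Qed.

Lemma sumN_le k f g : (forall i, i < k -> f i <= g i) -> sumN k f <= sumN k g.
Proof.
  induction k as [|k IH]; intros H; simpl; [reflexivity|].
  specialize (IH ltac:(intros; apply H; lia)); specialize (H k ltac:(lia)); lia.
Qed.

Lemma sumN_delta k x : sumN k (fun v => if Nat.eqb x v then 1 else 0) = if Nat.ltb x k then 1 else 0.
Proof.
  induction k as [|k IH]; simpl; [reflexivity|].
  rewrite IH; destruct (Nat.ltb_spec x k), (Nat.ltb_spec x (S k)), (Nat.eqb_spec x k); lia.
Qed.

Lemma sumN_countn_fibres N k (p : nat -> bool) (f : nat -> nat) : (forall i, i < k -> f i < N) ->
  sumN N (fun v => countn k (fun i => p i && Nat.eqb (f i) v)) = countn k p.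
Proof.
  induction k as [|k IH]; simpl; intros Hf; [rewrite sumN_const; lia|].
  rewrite sumN_add, IH by (intros; apply Hf; lia).
  destruct (p k); simpl.
  - rewrite sumN_delta; destruct (Nat.ltb_spec (f k) N); [lia|].
    specialize (Hf k ltac:(lia)); lia.
  - rewrite sumN_const; lia.
Qed.

Lemma countn_le1 k p :
  (forall i j, i < k -> j < k -> p i = true -> p j = true -> i = j) -> countn k p <= 1.
Proof.
  induction k as [|k IH]; simpl; intros Huniq; [lia|].
  destruct (p k) eqn:Hpk.
  - enough (countn k p = 0) by lia.
    destruct (Nat.eq_dec (countn k p) 0) as [|Hne]; [assumption|].
    destruct (countn_gt0 k p ltac:(lia)) as [i [Hi Hpi]].
    specialize (Huniq i k ltac:(lia) ltac:(lia) Hpi Hpk); lia.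
  - specialize (IH ltac:(intros; apply Huniq; auto; lia)); lia.
Qed.

Lemma countn_suffix r s : countn (r + s) (fun i => Nat.leb r i) = s.
Proof.
  induction s as [|s IH].
  - rewrite Nat.add_0_r.
    enough (forall j, j <= r -> countn j (fun i => Nat.leb r i) = 0) by auto.
    induction j as [|j IHj]; simpl; intros Hj; [reflexivity|].
    rewrite IHj by lia; destruct (Nat.leb_spec r j); lia.
  - rewrite Nat.add_succ_r; simpl; rewrite IH; destruct (Nat.leb_spec r (r + s)); lia.
Qed.

Variables (r s : nat) (D : list (Z * Z)) (C : curve).
Hypothesis HC : is_curve r s D C.

Local Notation val := (valence r s (length D) C).

Lemma sum_valence : sumN (nv C) val = 2 * ne C + (r + s) + length D.
Proof.
  destruct HC as [He [Hm [Hy _]]]; unfold valence; rewrite !sumN_add.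
  pose proof (sumN_countn_fibres (nv C) (ne C) (fun _ => true) (esrc C)
                ltac:(intros; apply He; assumption)) as Hsrc.
  pose proof (sumN_countn_fibres (nv C) (ne C) (fun _ => true) (etgt C)
                ltac:(intros; apply He; assumption)) as Htgt.
  pose proof (sumN_countn_fibres (nv C) (r + s) (fun _ => true) (mvert C) Hm) as Hmark.
  pose proof (sumN_countn_fibres (nv C) (length D) (fun _ => true) (yvert C) Hy) as Hends.
  simpl in Hsrc, Htgt, Hmark, Hends; rewrite countn_true in Hsrc, Htgt, Hmark, Hends; lia.
Qed.

Hypothesis Hinj : forall i j, i < r + s -> j < r + s -> mvert C i = mvert C j -> i = j.
Hypothesis Hdesc : refined_descendant r s D C.

Definition complex_markings_at (v : nat) : nat :=
  countn (r + s) (fun i => Nat.leb r i && Nat.eqb (mvert C i) v).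

Lemma valence_ge_complex_markings v : v < nv C -> 3 + complex_markings_at v <= val v.
Proof.
  intros Hv; pose proof (proj1 (proj2 (proj2 (proj2 (proj2 HC)))) v Hv) as Hval3.
  destruct (Nat.eq_dec (complex_markings_at v) 0) as [->|Hne]; [lia|].
  destruct (countn_gt0 _ _ (ltac:(lia) :
     0 < complex_markings_at v)) as [i [Hi Hpi]].
  apply andb_true_iff in Hpi as [Hri Hiv]; apply Nat.leb_le in Hri; apply Nat.eqb_eq in Hiv.
  assert (Hle1 : complex_markings_at v <= 1).
  { apply countn_le1; intros a b Ha Hb Hpa Hpb.
    apply andb_true_iff in Hpa as [_ Ha']; apply andb_true_iff in Hpb as [_ Hb'].
    apply Nat.eqb_eq in Ha'; apply Nat.eqb_eq in Hb'; apply Hinj; congruence. }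
  assert (val v = 4) by (rewrite <- Hiv; apply (proj2 Hdesc); lia); lia.
Qed.

(* With the complex markings at distinct 4-valent vertices, the valences sum to at least
   [3 |V| + s]; an unmarked vertex of higher valence adds one more. *)
Lemma refined_descendant_unmarked_trivalent v0 :
  length D + r <= ne C + 3 -> v0 < nv C -> (forall i, i < r + s -> mvert C i <> v0) ->
  val v0 = 3.
Proof.
  intros Hsize Hv0 Hunmarked.
  pose proof (proj1 (proj2 (proj2 (proj2 (proj2 HC)))) v0 Hv0) as Hval3.
  destruct (Nat.eq_dec (val v0) 3) as [|Hne3]; [assumption | exfalso].
  assert (Hbound : forall v, v < nv C ->
            3 + complex_markings_at v + (if Nat.eqb v0 v then 1 else 0) <= val v).
  { intros v Hv; destruct (Nat.eqb_spec v0 v) as [<-|]; [|pose proof (valence_ge_complex_markings v Hv); lia].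
    enough (complex_markings_at v0 = 0) by lia.
    destruct (Nat.eq_dec (complex_markings_at v0) 0) as [|Hne]; [assumption|].
    destruct (countn_gt0 _ _ (ltac:(lia) :
       0 < complex_markings_at v0)) as [i [Hi Hpi]].
    apply andb_true_iff in Hpi as [_ Hiv]; apply Nat.eqb_eq in Hiv.
    exfalso; exact (Hunmarked i Hi Hiv). }
  pose proof (sumN_le _ _ _ Hbound) as Hsum.
  rewrite !sumN_add, sumN_const, sumN_delta, sum_valence in Hsum.
  assert (Hcm : sumN (nv C) complex_markings_at = s)
    by (unfold complex_markings_at; rewrite sumN_countn_fibres; [apply countn_suffix | apply HC]).
  destruct (Nat.ltb_spec v0 (nv C)); [|lia].
  destruct HC as [_ [_ [_ [[Hnv _] _]]]]; lia.
Qed.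

End Counting.

Lemma unoriented_refined_broccoli_refined_descendant r s D C :
  is_curve r s D C ->
  (forall i j, (i < r + s)%nat -> (j < r + s)%nat -> mvert C i = mvert C j -> i = j) ->
  unoriented_refined_broccoli r s D C -> refined_descendant r s D C.
Proof.
  intros HC Hinj Hbroc.
  assert (Hmv : forall i, (i < r + s)%nat -> (mvert C i < nv C)%nat) by apply HC.
  split; intros i Hi; destruct (Hbroc (mvert C i) (Hmv i ltac:(lia)))
    as [[Hval [j [Hj Hji]]] | [[Hval Hunm] | [Hval [j [Hj Hji]]]]].
  - exact Hval.
  - exfalso; exact (Hunm i ltac:(lia) eq_refl).
  - assert (i = j) by (apply Hinj; lia || assumption); lia.
  - assert (i = j) by (apply Hinj; lia || assumption); lia.
  - exfalso; exact (Hunm i ltac:(lia) eq_refl).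
  - exact Hval.
Qed.

Lemma refined_descendant_unoriented_refined_broccoli r s D C :
  (forall v, (v < nv C)%nat -> (forall i, (i < r + s)%nat -> mvert C i <> v) ->
     valence r s (length D) C v = 3%nat) ->
  refined_descendant r s D C -> unoriented_refined_broccoli r s D C.
Proof.
  intros Hunmarked [Hreal Hcomplex] v Hv.
  destruct (classic (exists i, (i < r + s)%nat /\ mvert C i = v)) as [[i [Hi <-]] | Hno].
  - destruct (lt_dec i r) as [Hir|Hir].
    + left; split; [apply Hreal | exists i]; auto.
    + right; right; split; [apply Hcomplex | exists i; split]; auto; lia.
  - right; left; split; [apply Hunmarked; [assumption|] | ];
      intros i Hi Hiv; apply Hno; eauto.
Qed.

Theorem lemma3p21 (r s : nat) (D : list (Z * Z)) (F : nat -> bool) (P : list R) :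
  Forall (fun v => v <> (0%Z, 0%Z)) D ->
  (r + 2 * s + cardF (length D) F + 1 = length D)%nat ->
  general_position r s D F P ->
  forall C : curve, is_curve r s D C -> ev_F r s D F C = P ->
    (refined_descendant r s D C <-> unoriented_refined_broccoli r s D C).
Proof.
  intros _ Hsize Hgp C HC HP.
  pose proof (general_position_marking_vertices_inj r s D F P C) as Hinj.
  pose proof (general_position_edge_bound r s D F P C Hgp HC HP) as Hedges.
  split.
  - intros Hdesc; apply refined_descendant_unoriented_refined_broccoli; [|assumption].
    intros v Hv Hunmarked.
    apply (refined_descendant_unmarked_trivalent r s D C HC); auto.
    unfold cardF in *; lia.
  - apply unoriented_refined_broccoli_refined_descendant; auto.
Qed.
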